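(* Let $G=(V,E)$ be a connected simple graph. Then $G^{(\pi)}$ is a tree for every injection $\pi:V\to\mathbb{N}$ if and only if every biconnected component of $G$ is a clique.
   Context: For a vertex $u$, $N(u)=\{v\in V: uv\in E\}$ is its open neighbourhood. Given an injection $\pi:V\to\mathbb{N}$, an ordered pair $(u,v)\in V^2$ is called good with respect to $\pi$ if $uv\in E$, $\pi(u)<\pi(v)$, and $\pi(u)<\pi(w)$ for every $w\in N(u)\cap N(v)$. The graph $G^{(\pi)}=(V,E^{(\pi)})$ is the spanning subgraph of $G$ with edge set $E^{(\pi)}=\{\{u,v\}: (u,v)\text{ is good with respect to }\pi\}$. A biconnected component (block) of $G$ is a maximal connected subgraph of $G$ that has no cut vertex of its own; a bridge with its endpoints is a biconnected component isomorphic to $K_2$. *)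

From mathcomp Require Import all_boot.
Set Implicit Arguments. Unset Strict Implicit. Unset Printing Implicit Defensive.

Section Graphs.
Variable T : finType.

Definition simple_graph (e : rel T) : Prop := symmetric e /\ irreflexive e.

Definition induced (e : rel T) (S : {set T}) : rel T :=
  fun x y => [&& e x y, x \in S & y \in S].

Definition connected_on (e : rel T) (S : {set T}) : Prop :=
  forall x y, x \in S -> y \in S -> connect (induced e S) x y.

Definition connected_graph (e : rel T) : Prop := forall x y, connect e x y.

Definition cut_vertex_of (e : rel T) (S : {set T}) (v : T) : Prop :=
  v \in S /\ ~ connected_on e (S :\ v).

Definition biconnected_set (e : rel T) (S : {set T}) : Prop :=
  connected_on e S /\ forall v, ~ cut_vertex_of e S v.

Definition block (e : rel T) (S : {set T}) : Prop :=
  biconnected_set e S /\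
  forall S' : {set T}, S \subset S' -> biconnected_set e S' -> S' = S.

Definition clique (e : rel T) (S : {set T}) : Prop :=
  forall x y, x \in S -> y \in S -> x != y -> e x y.

Definition has_cycle (e : rel T) : Prop :=
  exists p : seq T, [/\ 3 <= size p, uniq p & cycle e p].

Definition is_tree (e : rel T) : Prop := connected_graph e /\ ~ has_cycle e.

Definition good (e : rel T) (pi : T -> nat) (u v : T) : bool :=
  [&& e u v, pi u < pi v & [forall w, (e u w && e v w) ==> (pi u < pi w)]].

Definition Gpi (e : rel T) (pi : T -> nat) : rel T :=
  fun u v => good e pi u v || good e pi v u.

End Graphs.

(* If every block is a clique, G^pi is connected: when (u, v) is not good, a common
   neighbour w ranked below u lets the edge uv be replaced by the edges uw and wv, whose
   lower endpoints have smaller rank.  It is acyclic: a cycle of G^pi lies in a block,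
   hence in a clique, so its vertex of least rank is a common neighbour of the next two
   cycle vertices, and the edge between these cannot be good.
   Conversely, two non-adjacent vertices of a block yield a path a z c with a, c
   non-adjacent, and a path from a to c avoiding z, which is not a cut vertex.  Cutting
   this configuration along chords and interior neighbours of z leaves either a diamond
   or an induced cycle of length at least 4; ranking its vertices first, in a suitable
   order, makes all its edges good, so some G^pi has a cycle. *)

From mathcomp Require Import all_boot zify.
From Stdlib Require Import Classical ClassicalEpsilon.
Set Implicit Arguments. Unset Strict Implicit. Unset Printing Implicit Defensive.

Section Gpi.
Variable T : finType.
Variable e : rel T.
Hypothesis esym : symmetric e.
Hypothesis eirr : irreflexive e.

Lemma neq_of_edge x y : e x y -> x != y.
Proof. by apply: contraTneq => ->; rewrite eirr. Qed.

Lemma Gpi_sym pi : symmetric (Gpi e pi).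
Proof. by move=> u v; rewrite /Gpi orbC. Qed.

Lemma Gpi_subrel pi : subrel (Gpi e pi) e.
Proof. by move=> u v /orP [] /andP [] // + _; rewrite esym. Qed.

Definition pi_seq (s : seq T) (v : T) : nat :=
  if v \in s then index v s else size s + enum_rank v.

Lemma pi_seq_inj s : injective (pi_seq s).
Proof.
move=> u v; rewrite /pi_seq.
have := index_mem u s; have := index_mem v s.
case: (boolP (u \in s)) => us; case: (boolP (v \in s)) => vs /= hv hu.
- exact: (@index_inj _ u s u v us vs).
- by move=> huv; move: hu; rewrite huv ltnNge leq_addr.
- by move=> huv; move: hv; rewrite -huv ltnNge leq_addr.
- by move/addnI/ord_inj; apply: enum_rank_inj.
Qed.

Lemma pi_seq_index s v : v \in s -> pi_seq s v = index v s.
Proof. by rewrite /pi_seq => ->. Qed.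

Lemma mem_pi_seq_lt_size s v : pi_seq s v < size s -> v \in s.
Proof. by rewrite /pi_seq; case: ifP => // _; rewrite ltnNge leq_addr. Qed.

Lemma good_pi_seq s u v : e u v -> u \in s -> pi_seq s u < pi_seq s v ->
  (forall w, w \in s -> index w s < index u s -> e u w -> e v w -> False) ->
  good e (pi_seq s) u v.
Proof.
move=> huv us lt noW; rewrite /good huv lt /=.
apply/forallP => w; apply/implyP => /andP [huw hvw]; rewrite ltnNge; apply/negP => le.
have ws : w \in s.
  by apply: mem_pi_seq_lt_size; rewrite (leq_ltn_trans le) // pi_seq_index // index_mem.
move: le; rewrite !pi_seq_index // leq_eqVlt => /orP [/eqP idx | lt_wu].
  by move: huw; rewrite (index_inj u ws us idx) eirr.
exact: noW lt_wu huw hvw.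
Qed.

Lemma diamond_Gpi_cycle x y u v : e u v -> e x u -> e x v -> e y u -> e y v ->
  x != y -> ~~ e x y -> has_cycle (Gpi e (pi_seq [:: x; y; u; v])).
Proof.
move=> huv hxu hxv hyu hyv nxy exy.
have nxu := neq_of_edge hxu; have nxv := neq_of_edge hxv.
have nyu := neq_of_edge hyu; have nyv := neq_of_edge hyv; have nuv := neq_of_edge huv.
set s := [:: x; y; u; v].
have [ix iy iu iv] : [/\ index x s = 0, index y s = 1, index u s = 2 & index v s = 3].
  by rewrite /s /= !eqxx (negbTE nxy) (negbTE nxu) (negbTE nxv) (negbTE nyu)
    (negbTE nyv) (negbTE nuv).
have [xs ys us vs] : [/\ x \in s, y \in s, u \in s & v \in s] by rewrite !inE !eqxx !orbT.
have before_y w : w \in s -> index w s < 1 -> e y w -> False.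
  by move=> ws; rewrite ltnS leqn0 -ix => /eqP/(index_inj x ws xs) ->; rewrite esym (negbTE exy).
exists [:: x; u; y; v]; split => //.
  by rewrite /= !inE !negb_or nxu nxy nxv (eq_sym u) nyu nuv nyv.
rewrite /= /Gpi andbT; apply/and4P; split; apply/orP.
- left; apply: good_pi_seq; rewrite ?pi_seq_index ?ix ?iu // => w _.
- right; apply: good_pi_seq; rewrite ?pi_seq_index ?iy ?iu // => w ws lt /(before_y w ws lt) [].
- left; apply: good_pi_seq; rewrite ?pi_seq_index ?iy ?iv // => w ws lt /(before_y w ws lt) [].
- right; apply: good_pi_seq; rewrite ?pi_seq_index ?ix ?iv // => w _.
Qed.

Lemma pi_seq_rcons s z v : v \in s -> pi_seq (rcons s z) v = index v s.
Proof.
by move=> vs; rewrite pi_seq_index -cats1 ?index_cat ?vs // mem_cat vs.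
Qed.

Lemma pi_seq_rcons_last s z : z \notin s -> pi_seq (rcons s z) z = size s.
Proof.
move=> zs; rewrite pi_seq_index ?mem_rcons ?mem_head //.
by rewrite -cats1 index_cat (negbTE zs) /= eqxx addn0.
Qed.

Lemma good_pi_seq_rcons s z u v : z \notin s -> u \in s -> e u v ->
  pi_seq (rcons s z) u < pi_seq (rcons s z) v ->
  (forall w, w \in s -> index w s < index u s -> e u w -> e v w -> False) ->
  good e (pi_seq (rcons s z)) u v.
Proof.
move=> zs us huv lt noW; apply: good_pi_seq => //; first by rewrite mem_rcons inE us orbT.
have idx_s w : w \in s -> index w (rcons s z) = index w s.
  by move=> ws; rewrite -(pi_seq_rcons z ws) pi_seq_index // mem_rcons inE ws orbT.
move=> w; rewrite mem_rcons inE => /orP [/eqP -> | ws]; last by rewrite !idx_s //; apply: noW.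
have idx_z : index z (rcons s z) = size s.
  by rewrite -cats1 index_cat (negbTE zs) /= eqxx addn0.
by rewrite idx_z idx_s // ltnNge index_size.
Qed.

Definition chordless (s : seq T) : Prop :=
  forall a b, a \in s -> b \in s -> index a s + 2 <= index b s -> ~~ e a b.

Inductive apex_path (z : T) (s : seq T) : Prop :=
  ApexPath of uniq s & sorted e s & z \notin s & 1 < size s &
    e z (head z s) & e z (last z s) & ~~ e (head z s) (last z s).

Lemma chordless_apex_Gpi_cycle z s : apex_path z s -> chordless s ->
  (forall w, w \in s -> e z w -> w = head z s \/ w = last z s) ->
  has_cycle (Gpi e (pi_seq (rcons s z))).
Proof.
(* [z :: s] is an induced cycle of length at least 4, so ranked in cycle order every edge
   [u v] has no common neighbour ranked below [u]. *)
case=> us ss zs s2 hzh hzl nhl chord onlyEnds.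
have good_s := good_pi_seq_rcons zs; have rank_z := pi_seq_rcons_last zs.
have hs : head z s \in s by case: (s) s2 => //= h t _; rewrite mem_head.
have ls : last z s \in s by case: (s) s2 => //= h t _; rewrite mem_last.
have ihead : index (head z s) s = 0 by case: (s) s2 => //= h t _; rewrite eqxx.
have ilast : index (last z s) s = (size s).-1.
  by case: (s) us s2 => // h t uht _; rewrite [last _ _]/= (last_nth h) index_uniq.
exists (z :: s); split => //; first by rewrite /= zs us.
rewrite [cycle _ _]/= rcons_path; apply/andP; split; last first.
  apply/orP; left; apply: good_s => //; first by rewrite esym.
    by rewrite rank_z pi_seq_rcons // ilast; case: (size s) s2.
  move=> w ws _ hlw hzw; case: (onlyEnds w ws hzw) => hw.
    by move: nhl; rewrite -hw esym hlw.
  by move: hlw; rewrite hw eirr.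
have [h [t def_s]] : exists h t, s = h :: t by case: (s) s2 => // h t; exists h, t.
subst s; apply/andP; split.
  apply/orP; right; apply: good_s => //; first by rewrite esym.
    by rewrite rank_z pi_seq_rcons // ihead.
  by move=> w _; rewrite ihead.
apply/(pathP z) => i lt_it.
have mi : nth z (h :: t) i \in h :: t by rewrite mem_nth //= ltnW.
have mi1 : nth z t i \in h :: t by rewrite inE mem_nth ?orbT.
have ii : index (nth z (h :: t) i) (h :: t) = i by rewrite index_uniq // ltnW.
have ii1 : index (nth z t i) (h :: t) = i.+1.
  by rewrite -[nth z t i]/(nth z (h :: t) i.+1) index_uniq.
apply/orP; left; apply: good_s; rewrite ?pi_seq_rcons ?ii ?ii1 //.
  by move: ss => /= /(pathP z); apply.
move=> w ws lt_wi _ hw; apply: (negP (chord _ _ ws mi1 _)); first by rewrite ii1 addn2.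
by rewrite esym.
Qed.

Lemma apex_path_ends_neq z s : apex_path z s -> head z s != last z s.
Proof.
case=> us _ _ s2 _ _ _; case: s us s2 => [|x [|y r]] //= /andP [xn _] _.
by apply: contraNneq xn => ->; apply: mem_last.
Qed.

Lemma apex_path_prefix z s1 w s2 : apex_path z (s1 ++ w :: s2) -> s1 != [::] ->
  e z w -> ~~ e (head z s1) w -> apex_path z (rcons s1 w).
Proof.
case=> us ss zs _ hzh _ _ ns1 hzw nhw.
have sub : subseq (rcons s1 w) (s1 ++ w :: s2).
  by rewrite -cats1 cat_subseq // sub1seq mem_head.
split.
- exact: subseq_uniq sub us.
- by move: ss; rewrite sorted_cat_cons => /andP [].
- by apply: contra zs; apply: mem_subseq.
- by rewrite size_rcons ltnS lt0n size_eq0.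
- by case: s1 ns1 hzh {us ss zs nhw sub}.
- by rewrite last_rcons.
- by rewrite last_rcons; case: s1 ns1 nhw {us ss zs hzh sub}.
Qed.

Lemma apex_path_suffix z s1 w s2 : apex_path z (s1 ++ w :: s2) -> s2 != [::] ->
  e z w -> ~~ e w (last w s2) -> apex_path z (w :: s2).
Proof.
case=> us ss zs _ _ hzl _ ns2 hzw nhw.
have sub : subseq (w :: s2) (s1 ++ w :: s2) by rewrite -{1}[w :: s2]cat0s cat_subseq ?sub0seq.
split => //.
- exact: subseq_uniq sub us.
- by move: ss; rewrite sorted_cat_cons => /andP [].
- by apply: contra zs; apply: mem_subseq.
- by rewrite /= ltnS lt0n size_eq0.
- by move: hzl; rewrite last_cat.
Qed.

Lemma apex_path_shortcut z s1 a m b s3 : apex_path z (s1 ++ a :: m ++ b :: s3) -> e a b ->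
  apex_path z (s1 ++ a :: b :: s3).
Proof.
case=> us ss zs _ hzh hzl nhl hab.
have sub : subseq (s1 ++ a :: b :: s3) (s1 ++ a :: m ++ b :: s3).
  by rewrite cat_subseq //= eqxx -{1}[b :: s3]cat0s cat_subseq ?sub0seq.
split.
- exact: subseq_uniq sub us.
- by move: ss; rewrite !sorted_cat_cons cat_path /= hab => /and3P [-> _ /andP [_ ->]].
- by apply: contra zs; apply: mem_subseq.
- by rewrite size_cat /= addnS addnS.
- by case: s1 hzh {us ss zs hzl nhl sub}.
- by move: hzl; rewrite !last_cat /= last_cat.
- by move: nhl; rewrite !last_cat /= last_cat; case: s1 {us ss zs hzh hzl sub}.
Qed.

Lemma cat_take_nth2 (s : seq T) x0 i j : i < j -> j < size s ->
  s = take i s ++ nth x0 s i :: (take (j - i.+1) (drop i.+1 s) ++ nth x0 s j :: drop j.+1 s).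
Proof.
move=> ij js; rewrite -(drop_nth x0 js).
have -> : drop j s = drop (j - i.+1) (drop i.+1 s) by rewrite drop_drop subnK.
by rewrite cat_take_drop -(drop_nth x0) ?(ltn_trans ij) // cat_take_drop.
Qed.

Lemma apex_path_chord z s a b : apex_path z s -> a \in s -> b \in s -> e a b ->
  index a s + 2 <= index b s -> exists2 s', apex_path z s' & size s' < size s.
Proof.
move=> hs as_ bs hab hij.
have ij : index a s < index b s by apply: leq_trans hij; rewrite addn2.
have js : index b s < size s by rewrite index_mem.
have def_s := cat_take_nth2 z ij js; rewrite (nth_index z as_) (nth_index z bs) in def_s.
rewrite def_s in hs.
exists (take (index a s) s ++ a :: b :: drop (index b s).+1 s).
  exact: apex_path_shortcut hs hab.
have ai : index a s < size s by rewrite index_mem.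
by rewrite size_cat /= size_take size_drop ai; lia.
Qed.

Definition exists_cyclic_Gpi : Prop := exists2 pi : T -> nat, injective pi & has_cycle (Gpi e pi).

Lemma apex_path_interior z s w : apex_path z s -> w \in s -> e z w ->
  w != head z s -> w != last z s ->
  (exists2 s', apex_path z s' & size s' < size s) \/ exists_cyclic_Gpi.
Proof.
move=> hs ws hzw nh nl; have nhl := apex_path_ends_neq hs.
move: hs nhl nh nl; case/splitPr: ws => s1 s2 hs nhl nh nl.
case: (hs) => _ _ _ _ hzh hzl ehl.
have ns1 : s1 != [::] by apply: contraNneq nh => ->.
have ns2 : s2 != [::] by apply: contraNneq nl => ->; rewrite last_cat.
have hd : head z (s1 ++ w :: s2) = head z s1 by case: (s1) ns1.
rewrite hd last_cat in nhl hzh hzl ehl.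
case: (boolP (e (head z s1) w)) => [hxw | nxw]; last first.
  left; exists (rcons s1 w); first exact: apex_path_prefix hs ns1 hzw nxw.
  by rewrite size_rcons size_cat /= addnS ltnS -{1}[size s1]addn0 ltn_add2l lt0n size_eq0.
case: (boolP (e w (last w s2))) => [hwy | nwy]; last first.
  left; exists (w :: s2); first exact: apex_path_suffix hs ns2 hzw nwy.
  by rewrite size_cat /= -{1}[(size s2).+1]add0n ltn_add2r lt0n size_eq0.
right; exists (pi_seq [:: head z s1; last w s2; z; w]); first exact: pi_seq_inj.
by apply: diamond_Gpi_cycle; rewrite // esym.
Qed.

Lemma apex_path_Gpi_cycle z s : apex_path z s -> exists_cyclic_Gpi.
Proof.
have [n] := ubnP (size s); elim: n z s => // n IH z s /ltnSE le_sn hs.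
have reduce : (exists2 s', apex_path z s' & size s' < size s) -> exists_cyclic_Gpi.
  by case=> s' hs' lt; apply: (IH z s') => //; apply: leq_trans le_sn.
case: (boolP (has (fun w => [&& e z w, w != head z s & w != last z s]) s)).
  case/hasP => w ws /and3P [hzw nh nl].
  by case: (apex_path_interior hs ws hzw nh nl) => [/reduce|].
move/hasPn => onlyEnds.
case: (boolP (has (fun a => has (fun b => e a b && (index a s + 2 <= index b s)) s) s)).
  case/hasP => a as_ /hasP [b bs /andP [hab hij]].
  exact/reduce/(apex_path_chord hs as_ bs hab hij).
move/hasPn => noChord.
exists (pi_seq (rcons s z)); first exact: pi_seq_inj.
apply: chordless_apex_Gpi_cycle => //.
  move=> a b as_ bs hij; have /hasPn/(_ b bs) := noChord a as_.
  by rewrite hij andbT.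
move=> w ws hzw; have := onlyEnds w ws; rewrite hzw /= negb_and !negbK.
by case/orP => /eqP ->; [left | right].
Qed.

Lemma induced_path_sub (S : {set T}) x p : path (induced e S) x p -> {subset p <= S}.
Proof.
elim: p x => [//|w p IH] x /= /andP [/and3P [_ _ wS] hp] v.
by rewrite inE => /orP [/eqP -> | /(IH w hp)].
Qed.

Lemma induced_path_two_step (S : {set T}) x p : path (induced e S) x p ->
  x != last x p -> ~~ e x (last x p) -> last x p \in S ->
  exists a z c, [/\ a \in S, z \in S & c \in S] /\ [/\ e a z, e z c, a != c & ~~ e a c].
Proof.
elim: p x => [|w p IH] x /=; first by rewrite eqxx.
move=> /andP [/and3P [hxw xS wS] hp] nxy nexy yS.
have [hw | nwy] := eqVneq w (last w p); first by move: nexy; rewrite -hw hxw.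
have [hwy | nwy'] := boolP (e w (last w p)); last exact: IH hp nwy nwy' yS.
by exists x, w, (last w p).
Qed.

Lemma biconnected_apex_path (S : {set T}) x y : biconnected_set e S ->
  x \in S -> y \in S -> x != y -> ~~ e x y -> exists z s, apex_path z s.
Proof.
case=> connS noCut xS yS nxy nexy.
case/connectP: (connS x y xS yS) => p hp def_y.
rewrite def_y in nxy nexy yS.
have [a [z [c [[aS zS cS] [haz hzc nac neac]]]]] := induced_path_two_step hp nxy nexy yS.
have connSz : connected_on e (S :\ z) by apply: NNPP => disconn; apply: (noCut z).
have aSz : a \in S :\ z by rewrite !inE aS andbT eq_sym neq_of_edge // esym.
have cSz : c \in S :\ z by rewrite !inE cS andbT eq_sym neq_of_edge.
case/connectP: (connSz a c aSz cSz) => q hq def_c.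
case/shortenP: hq def_c => q' hq' uq' sub_q def_c.
exists z, (a :: q'); split => //=.
- by apply: sub_path hq' => u v /and3P [].
- have nza : z != a by apply: neq_of_edge; rewrite esym.
  by rewrite inE negb_or nza /=; apply/negP => /(induced_path_sub hq'); rewrite !inE eqxx.
- by case: q' {hq' uq' sub_q} def_c => //= def_c; rewrite def_c eqxx in nac.
- by rewrite esym.
- by rewrite -def_c.
- by rewrite -def_c.
Qed.

Lemma biconnected_clique_of_Gpi_acyclic (S : {set T}) :
  (forall pi, injective pi -> ~ has_cycle (Gpi e pi)) -> biconnected_set e S -> clique e S.
Proof.
move=> acyclic biS x y xS yS nxy; apply/negPn/negP => nexy.
have [z [s hs]] := biconnected_apex_path biS xS yS nxy nexy.
by have [pi ipi] := apex_path_Gpi_cycle hs; apply: acyclic.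
Qed.

Lemma connect_Gpi_edge pi : injective pi -> forall u v, e u v -> connect (Gpi e pi) u v.
Proof.
move=> ipi; have Gsym := sym_connect_sym (Gpi_sym pi).
suff lt_case u v : e u v -> pi u < pi v -> connect (Gpi e pi) u v.
  move=> u v huv; case: (ltngtP (pi u) (pi v)) => [| lt_vu | /ipi eq_uv]; first exact: lt_case.
    by rewrite Gsym; apply: lt_case; rewrite 1?esym.
  by move: huv; rewrite eq_uv eirr.
have [n] := ubnP (pi u); elim: n u v => // n IH u v /ltnSE le_un huv lt_uv.
have [g | ] := boolP (good e pi u v); first by apply: connect1; rewrite /Gpi g.
rewrite /good huv lt_uv /= => /forallPn [w].
rewrite negb_imply -leqNgt => /andP [/andP [huw hvw] le_wu].
have lt_wu : pi w < pi u.
  by rewrite ltn_neqAle le_wu andbT; apply: contraTneq huw => /ipi ->; rewrite eirr.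
apply: (@connect_trans _ _ w).
  by rewrite Gsym; apply: IH; rewrite 1?esym //; apply: leq_trans le_un.
by apply: IH; rewrite 1?esym //; [apply: leq_trans le_un | apply: ltn_trans lt_uv].
Qed.

Lemma Gpi_connected pi : injective pi -> connected_graph e -> connected_graph (Gpi e pi).
Proof.
by move=> ipi conn x y; apply: connect_sub (conn x y) => u v /(connect_Gpi_edge ipi).
Qed.

Lemma induced_sym (S : {set T}) : symmetric (induced e S).
Proof. by move=> x y; rewrite /induced esym [(x \in S) && _]andbC. Qed.

Lemma connect_induced_path (S : {set T}) x p : path e x p -> {subset x :: p <= S} ->
  {in x :: p, forall y, connect (induced e S) x y}.
Proof.
elim: p x => [|w p IH] x /=; first by move=> _ _ y; rewrite inE => /eqP ->.
move=> /andP [hxw hp] sub_S y; rewrite inE => /predU1P [-> // | yp].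
apply: (@connect_trans _ _ w).
  by apply: connect1; rewrite /induced hxw !sub_S ?inE ?eqxx ?orbT.
by apply: IH => // v vp; apply: sub_S; rewrite inE vp orbT.
Qed.

Lemma connected_on_path x p : path e x p -> connected_on e [set y in x :: p].
Proof.
move=> hp a b; rewrite !in_set => ap bp.
have sub_S : {subset x :: p <= [set y in x :: p]} by move=> y; rewrite in_set.
apply: (@connect_trans _ _ x); last exact: connect_induced_path hp sub_S b bp.
by rewrite (sym_connect_sym (@induced_sym _)); apply: connect_induced_path hp sub_S a ap.
Qed.

Lemma cycle_biconnected c : uniq c -> 2 < size c -> cycle e c -> biconnected_set e [set x in c].
Proof.
move=> uc sc cc; split.
  by case: c uc sc cc => [//|h t] _ _ /=; rewrite rcons_path => /andP [/connected_on_path].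
move=> v [vc]; apply; rewrite inE in vc; case: (rot_to vc) => i t rot_c.
have := cc; rewrite -(rot_cycle i) rot_c /= rcons_path => /andP [hp _].
have := uc; rewrite -(rot_uniq i) rot_c /= => /andP [vt _].
case: t rot_c hp vt => [|w t] rot_c; first by move: sc; rewrite -(size_rot i) rot_c.
move=> /andP [_ /connected_on_path conn] vt; suff -> : [set x in c] :\ v = [set y in w :: t] by [].
apply/setP => y; rewrite !inE -(mem_rot i c) rot_c !inE.
by case: (eqVneq y v) => [-> | //] /=; rewrite -(negbTE vt) inE.
Qed.

Lemma biconnected_sub_block (S : {set T}) : biconnected_set e S ->
  exists2 B : {set T}, S \subset B & block e B.
Proof.
pose biconnectedb (B : {set T}) : bool :=
  if excluded_middle_informative (biconnected_set e B) then true else false.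
have biconnectedP B : reflect (biconnected_set e B) (biconnectedb B).
  by rewrite /biconnectedb; case: excluded_middle_informative => ?; constructor.
move=> /biconnectedP biS; have [B /maxsetP [/biconnectedP biB maxB] sub_SB] := maxset_exists biS.
by exists B => //; split => // B' sub_BB' /biconnectedP /maxB; apply.
Qed.

Lemma Gpi_common_nbr pi u v w : Gpi e pi u v -> e u w -> e v w -> minn (pi u) (pi v) < pi w.
Proof.
move=> + huw hvw; case/orP => /and3P [_ lt /forallP /(_ w)]; rewrite ?huw ?hvw /= => lt_w.
  by rewrite (minn_idPl (ltnW lt)).
by rewrite (minn_idPr (ltnW lt)).
Qed.

Lemma Gpi_no_clique_cycle pi c : injective pi -> uniq c -> 2 < size c ->
  cycle (Gpi e pi) c -> {in c &, forall x y, x != y -> e x y} -> False.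
Proof.
move=> ipi uc sc cc clq.
have [m0 m0c] : exists m0, m0 \in c.
  by case: c sc {uc cc clq} => // m0 c _; exists m0; rewrite mem_head.
case: (arg_minnP pi m0c) => m mc min_m; case: (rot_to mc) => i t rot_c.
have in_c x : x \in m :: t -> x \in c by rewrite -rot_c mem_rot.
have := sc; have := uc; have := cc; rewrite -(size_rot i) -(rot_uniq i) -(rot_cycle i) rot_c.
case: t {rot_c} in_c => [|t1 [|t2 r]] in_c //= /and3P [_ g12 _].
rewrite !inE !negb_or => /andP [/and3P [nm1 nm2 _] _] _.
have [t1c t2c] : t1 \in c /\ t2 \in c by split; apply: in_c; rewrite !inE eqxx ?orbT.
have below x : x \in c -> m != x -> pi m < pi x.
  by move=> xc nmx; rewrite ltn_neqAle min_m // andbT; apply: contra nmx => /eqP /ipi ->.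
have := Gpi_common_nbr g12 (clq _ _ t1c mc _) (clq _ _ t2c mc _).
rewrite !(eq_sym _ m) nm1 nm2 => /(_ isT isT); rewrite ltnNge leq_min.
by rewrite (ltnW (below _ t1c nm1)) (ltnW (below _ t2c nm2)).
Qed.

Lemma Gpi_acyclic pi : (forall B, block e B -> clique e B) -> injective pi ->
  ~ has_cycle (Gpi e pi).
Proof.
move=> cliques ipi [c [sc uc cc]].
have biC := cycle_biconnected uc sc (sub_cycle (@Gpi_subrel pi) cc).
have [B sub_cB blB] := biconnected_sub_block biC.
apply: (Gpi_no_clique_cycle ipi uc sc cc) => x y xc yc.
by apply: (cliques B blB); apply: (subsetP sub_cB); rewrite inE.
Qed.
End Gpi.

Theorem lemma2 (T : finType) (e : rel T) :
  simple_graph e -> 0 < #|T| -> connected_graph e ->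
  ((forall pi : T -> nat, injective pi -> is_tree (Gpi e pi)) <->
   (forall S : {set T}, block e S -> clique e S)).
Proof.
move=> [esym eirr] _ conn; split.
  move=> trees S [biS _]; apply: (biconnected_clique_of_Gpi_acyclic esym eirr) => // pi ipi.
  by case: (trees pi ipi).
move=> cliques pi ipi; split; first exact: Gpi_connected.
exact: Gpi_acyclic.
Qed.
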